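(* There exists a robust constrained Markov decision process $\mathcal{M}=(\mathcal{S},\mathcal{A},\mathcal{P},\{r_i\}_{i=0}^{I},\{d_i\}_{i=1}^{I},\gamma)$ whose duality gap $$\mathscr{D}=\Big[\max_{\pi}\min_{\lambda\ge 0}\mathcal{L}(\pi,\lambda)\Big]-\Big[\min_{\lambda\ge 0}\max_{\pi}\mathcal{L}(\pi,\lambda)\Big]$$ is strictly positive.
   Context: A robust constrained MDP is a tuple $(\mathcal{S},\mathcal{A},\mathcal{P},\{r_i\}_{i=0}^{I},\{d_i\}_{i=1}^{I},\gamma)$ with finite state space $\mathcal{S}$, finite action space $\mathcal{A}$, an uncertainty set $\mathcal{P}$ of transition kernels $P(\cdot\mid s,a)\in\Delta(\mathcal{S})$, reward functions $r_i:\mathcal{S}\times\mathcal{A}\to\mathbb{R}$ ($r_0$ is the objective reward, $r_1,\dots,r_I$ are constraint rewards), thresholds $d_i\in\mathbb{R}$, discount factor $\gamma\in[0,1)$, and a fixed initial state distribution $\mu$. Policies are stationary randomized maps $\pi:\mathcal{S}\to\Delta(\mathcal{A})$. The robust value of $r_i$ is $V_i^\pi(s)=\inf_{P\in\mathcal{P}}\mathbb{E}_{\pi,P}\big[\sum_{t\ge0}\gamma^t r_i(s_t,a_t)\mid s_0=s\big]$ and $V_i^\pi(\mu)=\mathbb{E}_{s\sim\mu}[V_i^\pi(s)]$. The problem is $\max_\pi V_0^\pi(\mu)$ subject to $V_i^\pi(\mu)\ge d_i$ for $i=1,\dots,I$, with Lagrangian $\mathcal{L}(\pi,\lambda)=V_0^\pi(\mu)-\sum_{i=1}^I\lambda_i\big(d_i-V_i^\pi(\mu)\big)$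 for $\lambda=(\lambda_1,\dots,\lambda_I)\ge0$; the max is over all stationary randomized policies. *)

From HB Require Import structures.
From mathcomp Require Import all_boot all_order all_algebra.
From mathcomp Require Import all_classical all_reals all_analysis.
From mathcomp Require Import Rstruct.
Set Implicit Arguments. Unset Strict Implicit. Unset Printing Implicit Defensive.
Import Order.TTheory GRing.Theory Num.Theory.
Import numFieldNormedType.Exports.
Local Open Scope classical_set_scope.
Local Open Scope ring_scope.

Section RCMDP.
Variable R : realType.

Definition is_dist (T : finType) (p : T -> R) : Prop :=
  (forall x, 0 <= p x) /\ \sum_(x : T) p x = 1.

Variables (S A : finType).

Definition is_policy (pi : S -> A -> R) : Prop := forall s, is_dist (pi s).

Definition is_kernel (P : S -> A -> S -> R) : Prop := forall s a, is_dist (P s a).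

Definition step (pi : S -> A -> R) (P : S -> A -> S -> R) (f : S -> R) : S -> R :=
  fun s => \sum_(a : A) pi s a * \sum_(s' : S) P s a s' * f s'.

Definition rew_pi (pi : S -> A -> R) (r : S -> A -> R) : S -> R :=
  fun s => \sum_(a : A) pi s a * r s a.

(* E_{pi,P}[ r(s_t,a_t) | s_0 = s ] = (P_pi^t r_pi)(s) *)
Definition exp_reward_t (pi : S -> A -> R) (P : S -> A -> S -> R)
  (r : S -> A -> R) (t : nat) (s : S) : R :=
  iter t (step pi P) (rew_pi pi r) s.

Definition value (gamma : R) (pi : S -> A -> R) (P : S -> A -> S -> R)
  (r : S -> A -> R) (s : S) : R :=
  limn (series (fun t : nat => gamma ^+ t * exp_reward_t pi P r t s)).

Definition robust_value (Pset : set (S -> A -> S -> R)) (gamma : R)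
  (pi : S -> A -> R) (r : S -> A -> R) (s : S) : \bar R :=
  ereal_inf [set (value gamma pi P r s)%:E | P in Pset].

Definition robust_value_mu (Pset : set (S -> A -> S -> R)) (gamma : R)
  (mu : S -> R) (pi : S -> A -> R) (r : S -> A -> R) : \bar R :=
  (\sum_(s : S) (mu s)%:E * robust_value Pset gamma pi r s)%E.

Variable I : nat.

Definition lagrangian (Pset : set (S -> A -> S -> R)) (gamma : R) (mu : S -> R)
  (r0 : S -> A -> R) (r : 'I_I -> S -> A -> R) (d : 'I_I -> R)
  (pi : S -> A -> R) (lam : 'I_I -> R) : \bar R :=
  (robust_value_mu Pset gamma mu pi r0
   - \sum_(i < I) (lam i)%:E * ((d i)%:E - robust_value_mu Pset gamma mu pi (r i)))%E.

Definition policies : set (S -> A -> R) := [set pi | is_policy pi].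
Definition nonneg_multipliers : set ('I_I -> R) := [set lam | forall i, 0 <= lam i].

Definition primal_maxmin Pset gamma mu r0 r d : \bar R :=
  ereal_sup [set ereal_inf [set lagrangian Pset gamma mu r0 r d pi lam
                           | lam in nonneg_multipliers] | pi in policies].

Definition dual_minmax Pset gamma mu r0 r d : \bar R :=
  ereal_inf [set ereal_sup [set lagrangian Pset gamma mu r0 r d pi lam
                           | pi in policies] | lam in nonneg_multipliers].

End RCMDP.

From HB Require Import structures.
From mathcomp Require Import all_boot all_order all_algebra.
From mathcomp Require Import all_classical all_reals all_analysis.
From mathcomp Require Import Rstruct.
From mathcomp Require Import ring lra.
Set Implicit Arguments. Unset Strict Implicit. Unset Printing Implicit Defensive.
Import Order.TTheory GRing.Theory Num.Theory.
Import numFieldNormedType.Exports.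
Local Open Scope classical_set_scope.
Local Open Scope ring_scope.

(* The counterexample has a start state, a middle state and an absorbing sink.
   At the start the adversary's kernel decides which of the two actions leads to
   the middle state, the other one leading to the sink; action [false] at the
   start has constraint reward -1, and the risky action [false] in the middle
   has objective reward 2 and constraint reward -2.  With discount 1/2, and u, w
   the probabilities of [false] at the start and in the middle, the robust
   objective is min(1 - u, u) w and the robust constraint value is
   -u - max(1 - u, u) w.  These are products of probabilities chosen at
   different states, so the feasible set is not convex: a policy meeting the
   threshold -1/2 has u + (1 - u) w <= 1/2, hence objective at most u w <= 1/8,
   while for every multiplier lam the always-safe policy has Lagrangian lam/2
   and the policy uniform at the start and risky in the middle has Lagrangian
   (1 - lam)/2, so the dual value is at least 1/4. *)

Section Distributions.
Context {R : realType}.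

Lemma is_dist_boolP (p : bool -> R) :
  is_dist p <-> [/\ 0 <= p true, 0 <= p false & p true + p false = 1].
Proof.
rewrite /is_dist big_bool; split=> [[p_ge0 p1]|[? ? p1]]; first by split.
by split=> // -[].
Qed.

Definition point_dist (T : finType) (x : T) : T -> R := fun y => (y == x)%:R.

Lemma sum_point_dist (T : finType) (x : T) (f : T -> R) :
  \sum_y point_dist x y * f y = f x.
Proof.
rewrite (bigD1 x) //= big1 => [|y /negbTE yx]; last by rewrite /point_dist yx mul0r.
by rewrite /point_dist eqxx mul1r addr0.
Qed.

Lemma is_dist_point (T : finType) (x : T) : is_dist (point_dist x).
Proof.
split=> [y|]; first exact: ler0n.
by under eq_bigr do rewrite -[point_dist _ _]mulr1; rewrite sum_point_dist.
Qed.

End Distributions.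

Section RobustMDP.
Context {R : realType}.
Variables (S A : finType) (pi : S -> A -> R).

Definition det_kernel (f : S -> A -> S) : S -> A -> S -> R :=
  fun s a => point_dist (f s a).

Lemma is_kernel_det f : is_kernel (det_kernel f).
Proof. by move=> s a; exact: is_dist_point. Qed.

Lemma step_det f g s :
  step pi (det_kernel f) g s = \sum_a pi s a * g (f s a).
Proof. by apply: eq_bigr => a _; rewrite sum_point_dist. Qed.

Lemma step0 (P : S -> A -> S -> R) : step pi P (fun=> 0) = (fun=> 0).
Proof.
apply: funext => s; apply: big1 => a _.
by rewrite big1 ?mulr0 // => s' _; rewrite mulr0.
Qed.

Lemma value_finite_horizon (n : nat) gamma P r (s : S) :
  iter n (step pi P) (rew_pi pi r) = (fun=> 0) ->
  value gamma pi P r s = \sum_(t < n) gamma ^+ t * exp_reward_t pi P r t s.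
Proof.
move=> horizon; rewrite /value; apply: norm_lim_near_cst; exists n => // m /= nm.
rewrite /series /= (big_cat_nat (leq0n n) nm) /= big_mkord.
rewrite [X in _ + X]big1_seq ?addr0 // => t /andP[_].
rewrite mem_index_iota => /andP[nt _].
by rewrite /exp_reward_t -(subnK nt) iterD horizon iter_fix ?step0 ?mulr0.
Qed.

Lemma ereal_inf_pair (T : Type) (f : T -> R) (x y : T) :
  ereal_inf [set (f z)%:E | z in [set x; y]] = (Num.min (f x) (f y))%:E.
Proof.
apply/eqP; rewrite eq_le; apply/andP; split.
  rewrite /Num.min; case: ifP => _; apply: ereal_inf_lbound.
    by exists x => //; left.
  by exists y => //; right.
by apply: le_ereal_inf_tmp => _ [z [->|->] <-]; rewrite lee_fin ge_min lexx ?orbT.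
Qed.

Lemma robust_value_mu_point Pset gamma r (x : S) :
  robust_value_mu Pset gamma (point_dist x) pi r = robust_value Pset gamma pi r x.
Proof.
rewrite /robust_value_mu (bigD1 x) //= big1 => [|s /negbTE sx]; last first.
  by rewrite /point_dist sx mul0e.
by rewrite /point_dist eqxx mul1e adde0.
Qed.

Context {Pset : set (S -> A -> S -> R)} {gamma : R} {mu : S -> R}.
Context {I : nat} {r0 : S -> A -> R} {r : 'I_I -> S -> A -> R} {d : 'I_I -> R}.

Lemma inf_lagrangian_le_objective :
  (ereal_inf [set lagrangian Pset gamma mu r0 r d pi lam | lam in @nonneg_multipliers R I]
   <= robust_value_mu Pset gamma mu pi r0)%E.
Proof.
apply: ge_ereal_inf; exists (robust_value_mu Pset gamma mu pi r0) => //.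
exists (fun=> 0) => //.
by rewrite /lagrangian big1 ?sube0 // => i _; rewrite mul0e.
Qed.

Lemma inf_lagrangian_infeasible (i : 'I_I) (v0 v : R) :
  robust_value_mu Pset gamma mu pi r0 = v0%:E ->
  robust_value_mu Pset gamma mu pi (r i) = v%:E -> v < d i ->
  ereal_inf [set lagrangian Pset gamma mu r0 r d pi lam | lam in @nonneg_multipliers R I]
  = -oo%E.
Proof.
move=> V0 Vi vd; apply: eq_ninfty => M.
have dv_gt0 : 0 < d i - v by rewrite subr_gt0.
pose lam j := if j == i then `|v0 - M| / (d i - v) else 0.
apply: ge_ereal_inf; exists (lagrangian Pset gamma mu r0 r d pi lam).
  by exists lam => // j; rewrite /lam; case: ifP => // _; rewrite divr_ge0 // ltW.
rewrite /lagrangian (bigD1 i) //= big1 => [|j /negbTE ji]; last by rewrite /lam ji mul0e.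
rewrite V0 Vi adde0 /lam eqxx -EFinB lee_fin divfK ?gt_eqF //.
by rewrite lerBlDr -lerBlDl ler_norm.
Qed.

End RobustMDP.

Inductive state := Start | Mid | Sink.

Definition state_code (s : state) : option bool :=
  match s with Start => None | Mid => Some true | Sink => Some false end.

Definition state_decode (o : option bool) : state :=
  match o with None => Start | Some true => Mid | Some false => Sink end.

Lemma state_codeK : cancel state_code state_decode.
Proof. by case. Qed.

HB.instance Definition _ := Finite.copy state (can_type state_codeK).

Section GapExample.
Context {R : realType}.

Definition transition (c : bool) (s : state) (a : bool) : state :=
  if (s == Start) && (a == c) then Mid else Sink.

Definition adversary_kernel (c : bool) : state -> bool -> state -> R :=
  det_kernel (transition c).

Definition uncertainty_set : set (state -> bool -> state -> R) :=
  [set adversary_kernel true; adversary_kernel false].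

Definition objective_reward (s : state) (a : bool) : R :=
  if (s, a) is (Mid, false) then 2 else 0.

Definition constraint_reward (s : state) (a : bool) : R :=
  match s, a with Start, false => -1 | Mid, false => -2 | _, _ => 0 end.

Definition constraint_rewards : 'I_1 -> state -> bool -> R := fun=> constraint_reward.

Definition thresholds : 'I_1 -> R := fun=> -1/2.

Local Notation example_lagrangian := (lagrangian uncertainty_set (1/2) (point_dist Start)
  objective_reward constraint_rewards thresholds).

Lemma value_adversary_kernel gamma pi c (r : state -> bool -> R) :
  (forall a, r Sink a = 0) ->
  value gamma pi (adversary_kernel c) r Start =
  rew_pi pi r Start + gamma * (pi Start c * rew_pi pi r Mid).
Proof.
move=> r_Sink.
have rew_Sink : rew_pi pi r Sink = 0.
  by rewrite /rew_pi big1 // => a _; rewrite r_Sink mulr0.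
have step_rew s : s != Start -> step pi (adversary_kernel c) (rew_pi pi r) s = 0.
  move=> /negbTE sS; rewrite step_det big1 // => a _.
  by rewrite /transition sS rew_Sink mulr0.
rewrite (value_finite_horizon (n := 2)).
  rewrite big_ord_recr big_ord1 /exp_reward_t /= expr0 expr1 mul1r step_det big_bool.
  by case: c {step_rew}; rewrite /transition /= rew_Sink mulr0 ?addr0 ?add0r.
apply: funext => s /=; rewrite step_det big1 // => a _.
by rewrite step_rew ?mulr0 // /transition; case: ifP.
Qed.

Lemma robust_value_mu_Start gamma pi (r : state -> bool -> R) :
  (forall a, r Sink a = 0) ->
  robust_value_mu uncertainty_set gamma (point_dist Start) pi r =
  (Num.min (rew_pi pi r Start + gamma * (pi Start true * rew_pi pi r Mid))
           (rew_pi pi r Start + gamma * (pi Start false * rew_pi pi r Mid)))%:E.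
Proof.
move=> r_Sink; rewrite robust_value_mu_point /robust_value.
by rewrite (ereal_inf_pair (fun P => value gamma pi P r Start)) !value_adversary_kernel.
Qed.

Lemma robust_objective pi :
  robust_value_mu uncertainty_set (1/2) (point_dist Start) pi objective_reward =
  (Num.min (pi Start true * pi Mid false) (pi Start false * pi Mid false))%:E.
Proof.
rewrite robust_value_mu_Start // /rew_pi !big_bool /objective_reward /=.
by congr (Num.min _ _)%:E; field.
Qed.

Lemma robust_constraint pi :
  robust_value_mu uncertainty_set (1/2) (point_dist Start) pi constraint_reward =
  (Num.min (- pi Start false - pi Start true * pi Mid false)
           (- pi Start false - pi Start false * pi Mid false))%:E.
Proof.
rewrite robust_value_mu_Start // /rew_pi !big_bool /constraint_reward /=.
by congr (Num.min _ _)%:E; field.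
Qed.

Lemma feasible_product_le (p u w : R) :
  0 <= p -> 0 <= u -> 0 <= w -> p + u = 1 -> -1/2 <= - u - p * w -> u * w <= 1/8.
Proof.
move=> p0 u0 w0 pu feasible.
have pw0 : 0 <= p * w by rewrite mulr_ge0.
have p_ge : 0 <= (p - 1/2) * (u * w) by rewrite mulr_ge0 ?mulr_ge0 //; lra.
have slack : 0 <= u * (1/2 - u - p * w) by rewrite mulr_ge0 //; lra.
have := sqr_ge0 (u - 1/4).
lra.
Qed.

Lemma example_primal_le :
  (primal_maxmin uncertainty_set (1/2) (point_dist Start) objective_reward
     constraint_rewards thresholds <= (1/8)%:E)%E.
Proof.
apply: ge_ereal_sup => _ [pi pi_policy <-].
have /is_dist_boolP[p0 u0 pu] := pi_policy Start.
have /is_dist_boolP[_ w0 _] := pi_policy Mid.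
have [feasible|infeasible] := lerP (-1/2) (- pi Start false - pi Start true * pi Mid false).
  apply: le_trans (inf_lagrangian_le_objective pi) _.
  rewrite robust_objective lee_fin ge_min; apply/orP; right.
  exact: feasible_product_le feasible.
rewrite (inf_lagrangian_infeasible (r := constraint_rewards) (i := ord0)
  (robust_objective pi) (robust_constraint pi)) ?leNye //.
by rewrite gt_min infeasible.
Qed.

Lemma example_lagrangianE pi lam :
  example_lagrangian pi lam =
  (Num.min (pi Start true * pi Mid false) (pi Start false * pi Mid false)
   - lam ord0 * (-1/2 - Num.min (- pi Start false - pi Start true * pi Mid false)
                                (- pi Start false - pi Start false * pi Mid false)))%:E.
Proof.
by rewrite /lagrangian big_ord1 robust_objective robust_constraint -EFinB.
Qed.

Definition safe_policy : state -> bool -> R := fun=> point_dist true.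

Definition mixed_policy (s : state) : bool -> R :=
  if s is Mid then point_dist false else fun=> 1/2.

Lemma is_policy_safe : is_policy safe_policy.
Proof. by move=> s; exact: is_dist_point. Qed.

Lemma is_policy_mixed : is_policy mixed_policy.
Proof.
case=> /=; [| exact: is_dist_point |]; apply/is_dist_boolP; split; lra.
Qed.

Lemma lagrangian_safe lam : example_lagrangian safe_policy lam = (lam ord0 / 2)%:E.
Proof.
rewrite example_lagrangianE /safe_policy /point_dist /=.
by congr _%:E; rewrite !(mulr0, mul0r, subr0, oppr0, minxx); field.
Qed.

Lemma lagrangian_mixed lam : example_lagrangian mixed_policy lam = ((1 - lam ord0) / 2)%:E.
Proof.
rewrite example_lagrangianE /mixed_policy /point_dist /=.
by congr _%:E; rewrite !(mulr1, minxx); field.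
Qed.

Lemma example_dual_ge :
  ((1/4)%:E <= dual_minmax uncertainty_set (1/2) (point_dist Start) objective_reward
     constraint_rewards thresholds)%E.
Proof.
apply: le_ereal_inf_tmp => _ [lam _ <-]; apply: le_ereal_sup_tmp.
have [lam_ge|lam_lt] := lerP (1/2) (lam ord0).
  exists (example_lagrangian safe_policy lam).
    by exists safe_policy => //; exact: is_policy_safe.
  by rewrite lagrangian_safe lee_fin; lra.
exists (example_lagrangian mixed_policy lam).
  by exists mixed_policy => //; exact: is_policy_mixed.
by rewrite lagrangian_mixed lee_fin; lra.
Qed.

End GapExample.

Theorem theorem1 :
  exists (S A : finType) (I : nat) (Pset : set (S -> A -> S -> Rdefinitions.R))
         (r0 : S -> A -> Rdefinitions.R) (r : 'I_I -> S -> A -> Rdefinitions.R)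
         (d : 'I_I -> Rdefinitions.R) (gamma : Rdefinitions.R) (mu : S -> Rdefinitions.R),
    [/\ 0 <= gamma < 1,
        is_dist mu,
        Pset !=set0,
        (forall P, Pset P -> is_kernel P) &
        (primal_maxmin Pset gamma mu r0 r d < dual_minmax Pset gamma mu r0 r d)%E].
Proof.
exists state, bool, 1%N, uncertainty_set, objective_reward, constraint_rewards,
  thresholds, (1/2), (point_dist Start).
split.
- by apply/andP; split; lra.
- exact: is_dist_point.
- by exists (adversary_kernel true); left.
- by move=> P [->|->]; exact: is_kernel_det.
- apply: le_lt_trans example_primal_le _; apply: lt_le_trans example_dual_ge.
  by rewrite lte_fin; lra.
Qed.
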